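(* Let $\mathcal{M}_{(1,1,1)}\subset\mathbb{P}^6\times\mathbb{P}^6$ be the closed subvariety of points $((a_1:\dots:a_7),(b_1:\dots:b_7))$ satisfying $\sum_{m,n=1}^7\varepsilon^{imn}b_ma_n=0$ for $i=1,\dots,7$. Identifying $\mathbb{P}^6$ with the space of lines in $\operatorname{Im}\mathbb{O}_k$ by $(a_1:\dots:a_7)\mapsto[\sum a_io_i]$, one has $$\mathcal{M}_{(1,1,1)}=\{([u],[v])\in\mathbb{P}^6\times\mathbb{P}^6\mid \operatorname{Im}(uv)=0\}.$$
   Context: Let $k$ be a field of characteristic $\ne2$. Label the points of the Fano plane by $1,\dots,7$ so that its directed lines are $123,145,167,246,275,374,365$; for $i,j,l$ put $\varepsilon^{ijl}=1$ if $(i,j,l)$ is a cyclic rotation of a directed line, $-1$ if $(j,i,l)$ is, and $0$ otherwise. $\mathbb{O}_k$ is the unital non-associative algebra with basis $1,o_1,\dots,o_7$ and $o_ro_s=\sum_i\varepsilon^{rsi}o_i-\delta_{rs}$; $\operatorname{Im}\mathbb{O}_k=\operatorname{span}(o_i)$; conjugation fixes $1$ and negates each $o_i$, and $\operatorname{Im}(u)=\tfrac12(u-\bar u)$. (The seven equations are the relations of the quiver with arrows $v_1,\dots,v_7$ from vertex 1 to 2 and $u_1,\dots,u_7$ from 2 to 3, evaluated on a representation of dimension $(1,1,1)$ with $v_n\mapsto a_n$, $u_m\mapsto b_m$.) *)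

From HB Require Import structures.
From mathcomp Require Import all_boot all_order all_algebra.
Set Implicit Arguments. Unset Strict Implicit. Unset Printing Implicit Defensive.
Import Order.TTheory GRing.Theory Num.Theory.
Local Open Scope ring_scope.

(* Directed lines of the Fano plane, points labelled 1..7. *)
Definition fano_lines : seq (nat * nat * nat) :=
  [:: (1,2,3); (1,4,5); (1,6,7); (2,4,6); (2,7,5); (3,7,4); (3,6,5)]%N.

Definition cyc_rot (i j l : nat) (t : nat * nat * nat) : bool :=
  [|| t == (i,j,l), t == (j,l,i) | t == (l,i,j)].

Definition eps (i j l : nat) : int :=
  if has (cyc_rot i j l) fano_lines then 1
  else if has (cyc_rot j i l) fano_lines then -1 else 0.

Section Oct.
Variable k : fieldType.

(* Octonions O_k as coordinate rows w.r.t. the basis 1 = index 0, o_i = index i (1<=i<=7). *)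
Definition oct := 'rV[k]_8.

Definition obasis (i : 'I_8) : oct := delta_mx 0 i.

Definition obprod (r s : 'I_8) : oct :=
  if r == ord0 then obasis s
  else if s == ord0 then obasis r
  else \sum_(i < 8 | i != ord0) (eps r s i)%:~R *: obasis i
       - ((r == s)%:R) *: obasis ord0.

Definition omul (u v : oct) : oct :=
  \sum_(r < 8) \sum_(s < 8) (u 0 r * v 0 s) *: obprod r s.

Definition oconj (u : oct) : oct :=
  \row_(j < 8) (if j == ord0 then u 0 j else - u 0 j).

Definition oIm (u : oct) : oct := 2^-1 *: (u - oconj u).

(* the element sum_i a_i o_i of Im O_k, for a = (a_1,...,a_7) (0-indexed row) *)
Definition imO (a : 'rV[k]_7) : oct := \sum_(i < 7) a 0 i *: obasis (lift ord0 i).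

Definition M111_rel (a b : 'rV[k]_7) : Prop :=
  forall i : 'I_7,
    \sum_(m < 7) \sum_(n < 7) (eps i.+1 m.+1 n.+1)%:~R * b 0 m * a 0 n = 0.
End Oct.

(* Up to the unit coordinate, [Im(uv)] is the coordinate vector of [uv],
   whose [o_i]-coordinate is [sum_{n,m} eps^{nmi} a_n b_m].  The structure
   constants satisfy [eps^{nmi} = - eps^{imn}] (a cyclic rotation followed by
   a transposition), so this coordinate is minus the [i]-th quiver relation. *)
From HB Require Import structures.
From mathcomp Require Import all_boot all_order all_algebra ring.
Import GRing.Theory.
Local Open Scope ring_scope.

Lemma eps_swap13 (n m i : 'I_7) : eps n.+1 m.+1 i.+1 = - eps i.+1 m.+1 n.+1.
Proof.
have table : all (fun n => all (fun m => all (fun i =>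
    eps n m i == - eps i m n) (iota 1 7)) (iota 1 7)) (iota 1 7).
  by vm_compute.
have in_range (x : 'I_7) : x.+1 \in iota 1 7 by rewrite mem_iota /= ltnS ltn_ord.
apply/eqP; move/allP: table => /(_ _ (in_range n)) /allP /(_ _ (in_range m)) /allP.
exact.
Qed.

Lemma lift0_eq0 (n : nat) (i : 'I_n) : (lift ord0 i == ord0 :> 'I_n.+1) = false.
Proof. by apply/negbTE; rewrite eq_sym neq_lift. Qed.

Section OctonionCoordinates.
Variable k : fieldType.

Lemma obasisE (i j : 'I_8) : obasis k i 0 j = (i == j)%:R.
Proof. by rewrite /obasis mxE eqxx eq_sym. Qed.

Lemma imO_unit (a : 'rV[k]_7) : imO a 0 ord0 = 0.
Proof.
rewrite /imO summxE big1 // => j _.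
by rewrite mxE obasisE lift0_eq0 mulr0.
Qed.

Lemma imO_lift (a : 'rV[k]_7) (i : 'I_7) : imO a 0 (lift ord0 i) = a 0 i.
Proof.
rewrite /imO summxE (bigD1 i) //= big1 ?addr0 => [|j /negbTE ji].
  by rewrite mxE obasisE eqxx mulr1.
by rewrite mxE obasisE (inj_eq (@lift_inj _ ord0)) ji mulr0.
Qed.

Lemma obprod_lift (n m i : 'I_7) :
  obprod k (lift ord0 n) (lift ord0 m) 0 (lift ord0 i) = (eps n.+1 m.+1 i.+1)%:~R.
Proof.
rewrite /obprod !lift0_eq0 !mxE lift0_eq0 andbF mulr0 subr0 summxE.
rewrite (bigD1 (lift ord0 i)) ?neq_lift //= big1 ?addr0 => [|j /andP[_ /negbTE ji]].
  by rewrite mxE obasisE eqxx mulr1.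
by rewrite mxE obasisE ji mulr0.
Qed.

Lemma omul_imO_lift (a b : 'rV[k]_7) (i : 'I_7) :
  omul (imO a) (imO b) 0 (lift ord0 i) =
  \sum_(n < 7) \sum_(m < 7) a 0 n * b 0 m * (eps n.+1 m.+1 i.+1)%:~R.
Proof.
rewrite /omul summxE big_ord_recl /= summxE big1 ?add0r => [|s _]; last first.
  by rewrite mxE imO_unit !mul0r.
apply: eq_bigr => n _; rewrite summxE big_ord_recl /= mxE imO_unit mulr0 mul0r add0r.
by apply: eq_bigr => m _; rewrite mxE !imO_lift obprod_lift.
Qed.

Lemma oIm_eq0 (w : oct k) : (2%N \notin [pchar k])%N ->
  oIm w = 0 <-> forall i : 'I_7, w 0 (lift ord0 i) = 0.
Proof.
move=> hchar; have two_neq0 : (2%:R : k) != 0.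
  by apply: contra hchar => h; rewrite inE /= h.
have oIm_lift i : oIm w 0 (lift ord0 i) = w 0 (lift ord0 i).
  by rewrite /oIm !mxE lift0_eq0 opprK -mulr2n -[w 0 _ *+ 2]mulr_natl mulrA mulVf // mul1r.
split=> [w0 i | wlift0]; first by rewrite -oIm_lift w0 mxE.
apply/rowP => j; rewrite [RHS]mxE; case: (unliftP ord0 j) => [i ->|->].
  by rewrite oIm_lift wlift0.
by rewrite /oIm !mxE eqxx subrr mulr0.
Qed.

Lemma omul_imO_lift_relation (a b : 'rV[k]_7) (i : 'I_7) :
  omul (imO a) (imO b) 0 (lift ord0 i) =
  - \sum_(m < 7) \sum_(n < 7) (eps i.+1 m.+1 n.+1)%:~R * b 0 m * a 0 n.
Proof.
rewrite omul_imO_lift exchange_big -sumrN; apply: eq_bigr => m _.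
rewrite -sumrN; apply: eq_bigr => n _.
by rewrite eps_swap13 mulrNz; ring.
Qed.

End OctonionCoordinates.

Theorem proposition10p2 (k : fieldType) (hchar : (2%N \notin [pchar k])%N)
  (a b : 'rV[k]_7) :
  a != 0 -> b != 0 ->
  (M111_rel a b <-> oIm (omul (imO a) (imO b)) = 0).
Proof.
move=> _ _; rewrite oIm_eq0 //; split=> rel i.
  by rewrite omul_imO_lift_relation rel oppr0.
by apply/eqP; rewrite -oppr_eq0 -omul_imO_lift_relation rel.
Qed.
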